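(* Let $n$ be an odd positive integer. Then $d_{\mathrm{GED}}(T_{\mathrm{ord}}, T_{\mathrm{rps}}) = \frac{1}{8}(n^2-1)$, where $T_{\mathrm{ord}}$ and $T_{\mathrm{rps}}$ are the ordered and rock-paper-scissors tournaments on $n$ players defined below.
   Context: A tournament on a finite set $V$ of players is a directed graph with vertex set $V$ such that for every two distinct vertices $u,v$ there is exactly one of the edges $(u,v)$, $(v,u)$; the edge $(u,v)$ means that $u$ beats $v$. Two tournaments $(V_1,E_1)$ and $(V_2,E_2)$ are isomorphic if there is a bijection $\pi\colon V_1\to V_2$ with $(u,v)\in E_1$ iff $(\pi(u),\pi(v))\in E_2$. For tournaments $T_1,T_2$ on the same number of players, the graph edit distance $d_{\mathrm{GED}}(T_1,T_2)$ is the minimum number of edges of $T_1$ whose orientation must be reversed so that the resulting tournament is isomorphic to $T_2$. The ordered tournament $T_{\mathrm{ord}}$ on $n$ players is the transitive tournament: the players are $v_1,\dots,v_n$ and $v_i$ beats $v_j$ whenever $i<j$. The tournament $T_{\mathrm{rps}}$ on $n$ players has players $v_0,\dots,v_{n-1}$ and, for each $i\in\{0,\dots,n-1\}$, edges from $v_i$ to each of $v_{(i+1)\bmod n},\dots,v_{(i+\lfloor n/2\rfloor)\bmod n}$ (for odd $n$ this is well defined and every player beats exactly $(n-1)/2$ others). *)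

From mathcomp Require Import all_boot.
Set Implicit Arguments. Unset Strict Implicit. Unset Printing Implicit Defensive.

(* A tournament on a finite player set T is a relation e : rel T
   (e u v means "u beats v") such that for distinct u, v exactly one of
   e u v, e v u holds, and no player beats itself. *)
Definition is_tournament (T : finType) (e : rel T) : bool :=
  [forall u, ~~ e u u] && [forall u, forall v, (u != v) ==> (e u v != e v u)].

(* Isomorphism of relations on T via a bijection pi of T (an injective
   self-map of a finite type, i.e. a bijection). *)
Definition tour_iso (T : finType) (e1 e2 : rel T) : bool :=
  [exists pi : {ffun T -> T}, injectiveb pi &&
     [forall u, forall v, e1 u v == e2 (pi u) (pi v)]].

(* Number of edges of e1 whose orientation differs in e' (edges (u,v) of e1
   that are not edges of e'); for tournaments this is the number of
   reversed edges needed to turn e1 into e'. *)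
Definition nflips (T : finType) (e1 e' : rel T) : nat :=
  #|[set p : T * T | e1 p.1 p.2 && ~~ e' p.1 p.2]|.

(* The candidate tournaments range over all
   relations on T (encoded as finite functions); the default value
   #|T| ^ 2 of the minimum is never attained when e2 itself is a candidate,
   since any count is at most #|T|^2. *)
Definition d_GED (T : finType) (e1 e2 : rel T) : nat :=
  \big[minn/(#|T| ^ 2)]_(f : {ffun T -> {ffun T -> bool}}
      | is_tournament (fun u v => f u v)
        && tour_iso (fun u v => f u v) e2)
     nflips e1 (fun u v => f u v).

Definition T_ord (n : nat) : rel 'I_n := fun i j => (i < j)%N.

Definition T_rps (n : nat) : rel 'I_n :=
  fun i j => let d := ((j + n - i) %% n)%N in (0 < d)%N && (d <= n./2)%N.
Arguments T_ord n : clear implicits.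
Arguments T_rps n : clear implicits.

From mathcomp Require Import all_boot.
From mathcomp Require Import zify.

Set Implicit Arguments.
Unset Strict Implicit.
Unset Printing Implicit Defensive.

(* Write n = 2k+1.  Every tournament isomorphic to T_rps is k-regular.  In T_ord
   player u loses only to the u players of smaller index, so at least k - u of
   its k losses must come from reversed edges; summing over u gives at least
   sum_u (k - u) = k(k+1)/2 = (n^2-1)/8 reversals.  T_rps itself attains the
   bound, since there u loses exactly to the k - u players above u + k. *)

Lemma sum_ord_interval n a b :
  \sum_(w < n) ((a <= w) && (w < b) : nat) = minn b n - a.
Proof.
elim: n => [|n IHn]; first by rewrite big_ord0; lia.
rewrite big_ord_recr /= IHn.
by case: (leqP a n); case: (ltnP n b) => /=; lia.
Qed.

Lemma sum_ord_subn_double k m :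
  k <= m -> (\sum_(u < m) (k - u)).*2 = k * k.+1.
Proof.
elim: k => [|k IHk] le_km; first by rewrite big1.
have -> : \sum_(u < m) (k.+1 - u) =
          \sum_(u < m) (k - u) + \sum_(u < m) ((0 <= u) && (u < k.+1) : nat).
  by rewrite -big_split; apply: eq_bigr => u _ /=; lia.
rewrite doubleD IHk ?sum_ord_interval; lia.
Qed.

Lemma bigmin_leq (I : finType) (x : nat) (P : pred I) (F : I -> nat) j :
  P j -> \big[minn/x]_(i | P i) F i <= F j.
Proof.
move=> Pj; have : j \in index_enum I by rewrite mem_index_enum.
elim: (index_enum I) => // i r IHr; rewrite big_cons in_cons.
case/orP => [/eqP <- | jr]; first by rewrite Pj geq_minl.
by case: (P i); [apply: leq_trans (geq_minr _ _) (IHr jr) | apply: IHr].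
Qed.

Section Tournaments.

Variable T : finType.
Implicit Types e : rel T.

Lemma tournamentP e :
  reflect ((forall u, ~~ e u u) /\ (forall u v, u != v -> e u v = ~~ e v u))
          (is_tournament e).
Proof.
apply: (iffP andP) => [[/forallP irr /forallP tot] | [irr tot]]; split => //.
- by move=> u v /(implyP (forallP (tot u) v)); case: (e u v); case: (e v u).
- by apply/forallP.
- apply/forallP => u; apply/forallP => v; apply/implyP => /tot ->.
  by case: (e v u).
Qed.

Lemma nflips_sum e1 e2 :
  nflips e1 e2 = \sum_u \sum_v (e1 u v && ~~ e2 u v : nat).
Proof.
rewrite /nflips pair_big /= -sum1_card big_mkcond /=.
by apply: eq_bigr => p _; rewrite inE; case: (_ && _).
Qed.

Lemma tour_iso_indegree e1 e2 (k : nat) :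
  tour_iso e1 e2 -> (forall u, \sum_v (e2 v u : nat) = k) ->
  forall u, \sum_v (e1 v u : nat) = k.
Proof.
case/existsP=> pi /andP[/injectiveP pi_inj /forallP iso] indeg2 u.
rewrite -(indeg2 (pi u)) [RHS](reindex_inj pi_inj) /=.
by apply: eq_bigr => v _; congr nat_of_bool; apply/eqP; exact: (forallP (iso v) u).
Qed.

Lemma d_GED_le e1 e2 : is_tournament e2 -> d_GED e1 e2 <= nflips e1 e2.
Proof.
move=> tour2; set f := [ffun u => [ffun v => e2 u v]].
have fE : (fun u v => f u v) =2 e2 by move=> u v; rewrite !ffunE.
have Pf : is_tournament (fun u v => f u v) && tour_iso (fun u v => f u v) e2.
  case/tournamentP: (tour2) => irr tot; apply/andP; split.
    by apply/tournamentP; split=> [u | u v]; rewrite !fE; [apply: irr | apply: tot].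
  apply/existsP; exists [ffun x => x]; apply/andP; split.
    by apply/injectiveP => x y; rewrite !ffunE.
  by apply/forallP => u; apply/forallP => v; rewrite fE !ffunE.
apply: leq_trans
  (bigmin_leq _ (fun g : {ffun T -> {ffun T -> bool}} => nflips e1 (fun u v => g u v)) Pf) _.
by rewrite !nflips_sum; apply: leq_sum => u _; apply: leq_sum => v _; rewrite fE.
Qed.

Lemma d_GED_ge e1 e2 (b : nat) :
  b <= #|T| ^ 2 ->
  (forall e, is_tournament e -> tour_iso e e2 -> b <= nflips e1 e) ->
  b <= d_GED e1 e2.
Proof.
move=> le_b_default lb; apply: (big_ind (leq b)) => // [x y le_bx le_by | f /andP[]].
  by rewrite leq_min le_bx le_by.
exact: lb.
Qed.

End Tournaments.

Lemma nflips_ord_ge n (k : nat) (e : rel 'I_n) :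
  is_tournament e -> (forall u, \sum_v (e v u : nat) = k) ->
  \sum_(u < n) (k - u) <= nflips (T_ord n) e.
Proof.
case/tournamentP=> irr tot indeg; rewrite nflips_sum; apply: leq_sum => u _.
have below_u : \sum_(v < n) ((0 <= v) && (v < u) : nat) = u.
  by rewrite sum_ord_interval; have := ltn_ord u; lia.
suff : k <= \sum_v (T_ord n u v && ~~ e u v : nat) + u by lia.
rewrite -(indeg u) -[X in _ + X]below_u -big_split /=; apply: leq_sum => v _.
rewrite /T_ord; case: (ltngtP u v) => [lt_uv | lt_vu | /val_inj ->].
- by rewrite (tot v u) ?negbK; [case: (e u v) | rewrite neq_ltn lt_uv orbT].
- by case: (e v u).
- by rewrite (negbTE (irr v)).
Qed.

Section RockPaperScissors.

Variable k : nat.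
Local Notation n := k.*2.+1.

Lemma T_rpsE (u v : 'I_n) :
  T_rps n u v = ((u < v) && (v <= u + k)) || (v + k < u).
Proof.
have lt_un := ltn_ord u; have lt_vn := ltn_ord v.
rewrite /T_rps /= uphalf_double.
have -> : (v + n - u) %% n = if u <= v then v - u else v + n - u.
  case: leqP => le_uv; last by rewrite modn_small; lia.
  by rewrite (_ : v + n - u = v - u + n) ?modnDr ?modn_small; lia.
by case: (leqP u v); lia.
Qed.

Lemma T_rps_tournament : is_tournament (T_rps n).
Proof.
apply/tournamentP; split => [u | u v neq_uv]; first by rewrite T_rpsE; lia.
have neq_uv' : (u : nat) != v by [].
by rewrite !T_rpsE; have := ltn_ord u; have := ltn_ord v; lia.
Qed.

Lemma T_rps_indegree (v : 'I_n) : \sum_u (T_rps n u v : nat) = k.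
Proof.
have -> : \sum_u (T_rps n u v : nat) =
    \sum_(u < n) ((v - k <= u) && (u < v) : nat) +
    \sum_(u < n) (((v + k).+1 <= u) && (u < n) : nat).
  rewrite -big_split; apply: eq_bigr => u _; rewrite T_rpsE.
  have := ltn_ord u; have := ltn_ord v.
  by case: (ltnP u v); case: (leqP (v - k) u); case: (leqP v (u + k));
     case: (leqP (v + k).+1 u) => /=; lia.
by rewrite !sum_ord_interval; have := ltn_ord v; lia.
Qed.

Lemma nflips_ord_rps : nflips (T_ord n) (T_rps n) = \sum_(u < n) (k - u).
Proof.
rewrite nflips_sum; apply: eq_bigr => u _.
have -> : \sum_v (T_ord n u v && ~~ T_rps n u v : nat) =
          \sum_(v < n) (((u + k).+1 <= v) && (v < n) : nat).
  by apply: eq_bigr => v _; rewrite T_rpsE /T_ord;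
     have := ltn_ord u; have := ltn_ord v; lia.
by rewrite sum_ord_interval; have := ltn_ord u; lia.
Qed.

End RockPaperScissors.

Theorem proposition1 (n : nat) (n_odd : odd n) :
  d_GED (T_ord n) (T_rps n) = ((n * n - 1) %/ 8)%N.
Proof.
have [k ->] : exists k, n = k.*2.+1.
  by exists n./2; rewrite -[n in LHS]odd_double_half n_odd.
have triangle : (\sum_(u < k.*2.+1) (k - u)).*2 = k * k.+1.
  by apply: sum_ord_subn_double; lia.
have -> : (k.*2.+1 * k.*2.+1 - 1) %/ 8 = \sum_(u < k.*2.+1) (k - u).
  by rewrite (_ : _ - 1 = 8 * \sum_(u < k.*2.+1) (k - u)) ?mulKn //; lia.
apply/eqP; rewrite eqn_leq -{1}nflips_ord_rps d_GED_le ?T_rps_tournament //=.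
apply: d_GED_ge => [|e tour iso].
  by rewrite card_ord expnS expn1; move: triangle; set S := \sum_(u < _) _; nia.
exact: nflips_ord_ge tour (tour_iso_indegree iso (@T_rps_indegree k)).
Qed.
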